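(* Let $\mathcal G$ be a tree on $n\ge2$ nodes (so it has $n-1$ edges), with oriented incidence matrix $D_\tau\in\mathbb R^{n\times(n-1)}$, edge-weight matrix $W=\mathrm{diag}(w_1,\dots,w_{n-1})$, $w_l>0$, and time-scale matrix $E=\mathrm{diag}(\epsilon_1,\dots,\epsilon_n)$, $\epsilon_i>0$; let $L_{e,s}^\tau=D_\tau^TE^{-1}D_\tau$ and $\sigma_w,\sigma_v$ real scalars. Consider $$\tilde\Sigma_\tau(s)=\big(sI+L_{e,s}^\tau W\big)^{-1}\begin{bmatrix}\sigma_wD_\tau^TE^{-1/2} & -\sigma_vL_{e,s}^\tau W^{1/2}\end{bmatrix},\qquad \Pi_\tau(s)=W^{1/2}\tilde\Sigma_\tau(s).$$ Then $$\|\tilde\Sigma_\tau\|_\infty^2=\bar\sigma\big(\sigma_w^2(WL_{e,s}^\tau W)^{-1}+\sigma_v^2W^{-1}\big),\qquad \|\Pi_\tau\|_\infty^2=\sigma_w^2\,\bar\sigma\big((W^{1/2}L_{e,s}^\tau W^{1/2})^{-1}\big)+\sigma_v^2.$$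
   Context: The incidence matrix of a graph with an arbitrary orientation of each edge has entry $1$ in row $i$, column $l$ if node $i$ is the initial node of edge $l$, $-1$ if it is the terminal node, and $0$ otherwise. Powers of positive diagonal matrices are taken entrywise. For a stable transfer matrix $\Phi(s)$, $\|\Phi\|_\infty=\sup_{\omega\in\mathbb R}\bar\sigma(\Phi(j\omega))$ where $\bar\sigma$ is the largest singular value. (This is the general edge-consensus model with $R=I$, which is the case when the graph is its own spanning tree.) *)

From HB Require Import structures.
From mathcomp Require Import all_boot all_order all_algebra.
From mathcomp Require Import all_classical all_reals ereal.
From mathcomp Require Import complex.
Set Implicit Arguments. Unset Strict Implicit. Unset Printing Implicit Defensive.
Import Order.TTheory GRing.Theory Num.Theory.
Local Open Scope ring_scope.
Local Open Scope classical_set_scope.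

(* Oriented graph on nodes 'I_n with m edges, edge l goes from (e l).1
   (initial node) to (e l).2 (terminal node). *)

Definition adj n m (e : 'I_m -> 'I_n * 'I_n) : rel 'I_n :=
  fun i j => [exists l : 'I_m, ((e l).1 == i) && ((e l).2 == j)
                            || ((e l).1 == j) && ((e l).2 == i)].

(* e describes (an arbitrary orientation of) a tree on n nodes with m = n-1
   edges: simple (no loops, no parallel edges) and connected. *)
Definition is_tree n (e : 'I_n.-1 -> 'I_n * 'I_n) : Prop :=
  [/\ (forall l, (e l).1 != (e l).2),
      (forall l k, l != k -> (e l != e k) /\ (e l != ((e k).2, (e k).1)))
    & (forall i j : 'I_n, connect (adj e) i j)].

Definition incidence (R : pzRingType) n m (e : 'I_m -> 'I_n * 'I_n)
  : 'M[R]_(n, m) :=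
  \matrix_(i, l) (if (e l).1 == i then 1 else if (e l).2 == i then -1 else 0).

Definition diagm (R : realType) k (d : 'I_k -> R) : 'M[R]_k :=
  diag_mx (\row_i d i).
Definition diag_sqrt (R : realType) k (d : 'I_k -> R) : 'M[R]_k :=
  diag_mx (\row_i Num.sqrt (d i)).
Definition diag_inv (R : realType) k (d : 'I_k -> R) : 'M[R]_k :=
  diag_mx (\row_i (d i)^-1).
Definition diag_invsqrt (R : realType) k (d : 'I_k -> R) : 'M[R]_k :=
  diag_mx (\row_i (Num.sqrt (d i))^-1).

Local Open Scope complex_scope.

Definition cmx (R : rcfType) p q (A : 'M[R]_(p, q)) : 'M[R[i]]_(p, q) :=
  map_mx (fun x => x%:C) A.

Definition ctr (R : rcfType) p q (A : 'M[R[i]]_(p, q)) : 'M[R[i]]_(q, p) :=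
  (map_mx (fun z : R[i] => z^*) A)^T.

(* largest singular value: square root of the largest eigenvalue of A^H A
   (the eigenvalues of A^H A are real and nonnegative) *)
Definition sigma_bar (R : realType) p q (A : 'M[R[i]]_(p, q)) : R :=
  Num.sqrt (sup [set x : R | eigenvalue (ctr A *m A) x%:C]).

Definition hinf_norm (R : realType) p q (Phi : R[i] -> 'M[R[i]]_(p, q))
  : \bar R :=
  ereal_sup [set (sigma_bar (Phi (Complex 0 w)))%:E | w in [set: R]].

Definition edge_lap (R : realType) n (e : 'I_n.-1 -> 'I_n * 'I_n)
  (eps : 'I_n -> R) : 'M[R]_n.-1 :=
  (incidence R e)^T *m diag_inv eps *m incidence R e.

Definition Sigma_tau (R : realType) n (e : 'I_n.-1 -> 'I_n * 'I_n)
  (w : 'I_n.-1 -> R) (eps : 'I_n -> R) (sw sv : R) (s : R[i])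
  : 'M[R[i]]_(n.-1, n + n.-1) :=
  invmx (s%:M + cmx (edge_lap e eps *m diagm w)) *m
  row_mx (cmx (sw *: ((incidence R e)^T *m diag_invsqrt eps)))
         (cmx ((- sv) *: (edge_lap e eps *m diag_sqrt w))).

Definition Pi_tau (R : realType) n (e : 'I_n.-1 -> 'I_n * 'I_n)
  (w : 'I_n.-1 -> R) (eps : 'I_n -> R) (sw sv : R) (s : R[i])
  : 'M[R[i]]_(n.-1, n + n.-1) :=
  cmx (diag_sqrt w) *m Sigma_tau e w eps sw sv s.

From HB Require Import structures.
From mathcomp Require Import all_boot all_order all_algebra.
From mathcomp Require Import all_classical all_reals ereal.
From mathcomp Require Import complex.
Set Implicit Arguments. Unset Strict Implicit. Unset Printing Implicit Defensive.
Import Order.TTheory GRing.Theory Num.Theory.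
Local Open Scope ring_scope.
Local Open Scope classical_set_scope.
Local Open Scope complex_scope.

(* Write [Sigma_tau] as [T(s) = (s + L W)^-1 K], where [L = F F^T] with [F = D^T E^-1/2] of
   full row rank because the graph is a tree, and [K K^T = sw^2 L + sv^2 L W L].  For a row
   vector [x] put [u = x (iω + L W)^-1] and [y = x (L W)^-1]; then [d = y - u] satisfies
   [d L W = iω u], so the cross term of [|y K|^2 = |u K|^2 + 2 Re <d K, u K> + |d K|^2] is the
   real part of [iω] times a real number and vanishes.  Hence [T(iω) T(iω)^H <= T(0) T(0)^H]
   in the Loewner order and both H-infinity norms are attained at [ω = 0], where
   [T(0) T(0)^H = sw^2 (W L W)^-1 + sv^2 W^-1] and
   [W^1/2 T(0) T(0)^H W^1/2 = sw^2 (W^1/2 L W^1/2)^-1 + sv^2].  For these positive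
   semidefinite matrices the largest singular value is the largest eigenvalue. *)

Section ConjugateTranspose.
Variable R : rcfType.
Implicit Types (p q r k : nat).

Lemma ctrE p q (A : 'M[R[i]]_(p, q)) i j : ctr A i j = (A j i)^*.
Proof. by rewrite !mxE. Qed.

Lemma ctrK p q (A : 'M[R[i]]_(p, q)) : ctr (ctr A) = A.
Proof. by apply/matrixP => i j; rewrite !ctrE conjcK. Qed.

Lemma ctrM p q r (A : 'M[R[i]]_(p, q)) (B : 'M[R[i]]_(q, r)) :
  ctr (A *m B) = ctr B *m ctr A.
Proof.
apply/matrixP => i j; rewrite !mxE rmorph_sum; apply: eq_bigr => l _.
by rewrite !ctrE rmorphM mulrC.
Qed.

Lemma ctrD p q (A B : 'M[R[i]]_(p, q)) : ctr (A + B) = ctr A + ctr B.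
Proof. by apply/matrixP => i j; rewrite !mxE rmorphD. Qed.

Lemma ctr_cmx p q (A : 'M[R]_(p, q)) : ctr (cmx A) = cmx A^T.
Proof. by apply/matrixP => i j; rewrite ctrE !mxE conjc_real. Qed.

Lemma ctr_gram p q (A : 'M[R[i]]_(p, q)) : ctr (A *m ctr A) = A *m ctr A.
Proof. by rewrite ctrM ctrK. Qed.

Lemma ctr_tconj p q (A : 'M[R[i]]_(p, q)) : ctr A = A ^t*%sesqui.
Proof. by apply/matrixP => i j; rewrite !mxE. Qed.

Definition sqnorm k (u : 'rV[R[i]]_k) : R[i] := (u *m ctr u) 0 0.

Definition hform k (G : 'M[R[i]]_k) (u v : 'rV[R[i]]_k) : R[i] :=
  (u *m G *m ctr v) 0 0.

Lemma sqnorm_gt0 k (u : 'rV[R[i]]_k) : u != 0 -> 0 < sqnorm u.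
Proof. by rewrite /sqnorm ctr_tconj -dotmxE; apply: dotmx_is_dotmx. Qed.

Lemma sqnorm_ge0 k (u : 'rV[R[i]]_k) : 0 <= sqnorm u.
Proof.
have [->|/sqnorm_gt0/ltW //] := eqVneq u 0.
by rewrite /sqnorm mul0mx mxE.
Qed.

Lemma sqnorm_eq0 k (u : 'rV[R[i]]_k) : (sqnorm u == 0) = (u == 0).
Proof.
apply/idP/idP => [|/eqP ->]; last by rewrite /sqnorm mul0mx mxE.
by apply: contraLR => /sqnorm_gt0 /gt_eqF ->.
Qed.

Lemma hform_gram k p (A : 'M[R[i]]_(k, p)) x :
  hform (A *m ctr A) x x = sqnorm (x *m A).
Proof. by rewrite /hform /sqnorm ctrM !mulmxA. Qed.

Lemma hform_mul_gram p q r (P : 'M[R[i]]_(p, q)) (A : 'M[R[i]]_(q, r)) x :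
  hform ((P *m A) *m ctr (P *m A)) x x = hform (A *m ctr A) (x *m P) (x *m P).
Proof. by rewrite !hform_gram mulmxA. Qed.

Lemma hform_eigen k (G : 'M[R[i]]_k) v a :
  v *m G = a *: v -> hform G v v = a * sqnorm v.
Proof. by move=> h; rewrite /hform /sqnorm h -scalemxAl mxE. Qed.

Lemma hformDl k (G : 'M[R[i]]_k) u1 u2 v :
  hform G (u1 + u2) v = hform G u1 v + hform G u2 v.
Proof. by rewrite /hform !mulmxDl mxE. Qed.

Lemma hformDr k (G : 'M[R[i]]_k) u v1 v2 :
  hform G u (v1 + v2) = hform G u v1 + hform G u v2.
Proof. by rewrite /hform ctrD mulmxDr mxE. Qed.

Lemma hformC k (G : 'M[R[i]]_k) u v : ctr G = G -> hform G u v = (hform G v u)^*.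
Proof. by move=> hG; rewrite /hform -ctrE !ctrM ctrK hG mulmxA. Qed.

Lemma hform_cmx_sym k (S : 'M[R]_k) (u : 'rV[R[i]]_k) :
  S^T = S -> (hform (cmx S) u u)^* = hform (cmx S) u u.
Proof. by move=> S_sym; rewrite -hformC // ctr_cmx S_sym. Qed.

End ConjugateTranspose.

Section ComplexCast.
Variable R : rcfType.
Implicit Types (p q r k : nat).

Lemma cmxM p q r (A : 'M[R]_(p, q)) (B : 'M[R]_(q, r)) : cmx (A *m B) = cmx A *m cmx B.
Proof. exact: map_mxM. Qed.

Lemma cmxD p q (A B : 'M[R]_(p, q)) : cmx (A + B) = cmx A + cmx B.
Proof. exact: map_mxD. Qed.

Lemma cmxZ p q a (A : 'M[R]_(p, q)) : cmx (a *: A) = a%:C *: cmx A.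
Proof. exact: map_mxZ. Qed.

Lemma cmx_scalar k (a : R) : cmx (a%:M : 'M_k) = a%:C%:M.
Proof. exact: map_scalar_mx. Qed.

Lemma cmx_invmx k (A : 'M[R]_k) : cmx (invmx A) = invmx (cmx A).
Proof. exact: map_invmx. Qed.

Lemma cmx_unitmx k (A : 'M[R]_k) : (cmx A \in unitmx) = (A \in unitmx).
Proof. exact: map_unitmx. Qed.

Lemma cmx_row_free p q (A : 'M[R]_(p, q)) : row_free (cmx A) = row_free A.
Proof. by rewrite /row_free mxrank_map. Qed.

End ComplexCast.

Lemma invmxM (R : comUnitRingType) k (A B : 'M[R]_k) :
  A \in unitmx -> B \in unitmx -> invmx (A *m B) = invmx B *m invmx A.
Proof.
move=> A_unit B_unit; have AB_unit : A *m B \in unitmx by rewrite unitmx_mul A_unit.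
apply: (can_inj (mulmxK AB_unit)).
by rewrite (mulVmx AB_unit) !mulmxA (mulmxKV A_unit) (mulVmx B_unit).
Qed.

Lemma invmx_eq (R : comUnitRingType) k (A B : 'M[R]_k) : A *m B = 1%:M -> invmx A = B.
Proof.
move=> AB1; have [A_unit _] := mulmx1_unit AB1.
by rewrite -[invmx A]mulmx1 -AB1 mulmxA (mulVmx A_unit) mul1mx.
Qed.

Lemma invmx_gram (R : fieldType) k r (X : 'M[R]_(k, r)) : X *m X^T \in unitmx ->
  invmx (X *m X^T) = (invmx (X *m X^T) *m X) *m (invmx (X *m X^T) *m X)^T.
Proof.
move=> S_unit; rewrite trmx_mul trmx_inv trmx_mul trmxK mulmxA -(mulmxA _ X).
by rewrite (mulVmx S_unit) mul1mx.
Qed.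

Lemma sqrt_congr_inv (R : comUnitRingType) k (L Wh : 'M[R]_k) (a b : R) :
  L \in unitmx -> Wh \in unitmx ->
  Wh *m (a *: invmx (Wh *m Wh *m L *m (Wh *m Wh)) + b *: invmx (Wh *m Wh)) *m Wh
  = a *: invmx (Wh *m L *m Wh) + b%:M.
Proof.
move=> L_unit Wh_unit.
have S_unit : Wh *m L *m Wh \in unitmx by rewrite !unitmx_mul L_unit Wh_unit.
have WhL_unit : Wh *m (Wh *m L *m Wh) \in unitmx by rewrite unitmx_mul Wh_unit S_unit.
have -> : Wh *m Wh *m L *m (Wh *m Wh) = Wh *m (Wh *m L *m Wh) *m Wh by rewrite !mulmxA.
rewrite (invmxM WhL_unit Wh_unit) (invmxM Wh_unit S_unit) (invmxM Wh_unit Wh_unit).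
rewrite mulmxDr mulmxDl -!scalemxAr -!scalemxAl !mulmxA (mulmxV Wh_unit) !mul1mx.
by rewrite (mulmxKV Wh_unit) (mulVmx Wh_unit) scalemx1.
Qed.

Section LambdaMax.
Variable R : realType.
Implicit Types (p q k : nat).

(* For [k = 0] the set is empty and the supremum is a junk value, whence the
   hypotheses [0 < k] below. *)
Definition lambda_max k (Q : 'M[R[i]]_k) : R := sup [set x : R | eigenvalue Q x%:C].

Lemma sigma_barE p q (A : 'M[R[i]]_(p, q)) :
  sigma_bar A = Num.sqrt (lambda_max (ctr A *m A)).
Proof. by []. Qed.

Lemma lambda_max_eq k (Q : 'M[R[i]]_k) (c : R) :
  (exists2 v : 'rV_k, v != 0 & v *m Q = c%:C *: v) ->
  (forall mu : R, eigenvalue Q mu%:C -> mu <= c) -> lambda_max Q = c.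
Proof.
move=> [v v0 hv] ub.
have c_eig : [set x : R | eigenvalue Q x%:C] c by apply/eigenvalueP; exists v.
apply/le_anti/andP; split; first by apply: ge_sup => //; exists c.
by apply: ub_le_sup => //; exists c.
Qed.

Section Diagonalized.
Variables (k : nat) (Q U : 'M[R[i]]_k) (d : 'rV[R]_k).
Hypotheses (UUt : U *m ctr U = 1%:M) (UtU : ctr U *m U = 1%:M).
Hypothesis QE : Q = ctr U *m diag_mx (cmx d) *m U.

Lemma row_eigen_diagonalized j : row j U *m Q = (d 0 j)%:C *: row j U.
Proof.
rewrite QE !mulmxA -row_mul UUt row1 -rowE row_diag_mx -scalemxAl -rowE.
by rewrite mxE.
Qed.

Lemma row_diagonalized_neq0 j : row j U != 0.
Proof.
apply/eqP => Uj0; have := congr1 (row j) UUt.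
rewrite row_mul Uj0 mul0mx row1 => /matrixP /(_ 0 j).
by rewrite !mxE !eqxx => /eqP; rewrite eq_sym oner_eq0.
Qed.

Lemma eigenvalue_diagonalized (mu : R) : eigenvalue Q mu%:C -> exists j, mu = d 0 j.
Proof.
move=> /eigenvalueP [v v_eig v0]; set y := v *m ctr U.
have y_eig : y *m diag_mx (cmx d) = mu%:C *: y.
  by rewrite scalemxAl -v_eig QE !mulmxA -(mulmxA _ U) UUt mulmx1.
have [j yj] : exists j, y 0 j != 0.
  apply/existsP; apply: contraNT v0; rewrite negb_exists => /forallP y0.
  suff y_0 : y = 0 by rewrite -[v]mulmx1 -UtU mulmxA -/y y_0 mul0mx.
  by apply/rowP => j; have := y0 j; rewrite negbK !mxE => /eqP.
exists j; clearbody y; have := congr1 (fun y : 'rV_k => y 0 j) y_eig.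
by rewrite mul_mx_diag !mxE mulrC => /(mulIf yj) [->].
Qed.

Lemma rayleigh_diagonalized (c : R) x :
  (forall j, d 0 j <= c) -> hform Q x x <= c%:C * sqnorm x.
Proof.
move=> d_le; pose y := x *m ctr U.
have -> : hform Q x x = (y *m diag_mx (cmx d) *m ctr y) 0 0.
  by rewrite /hform /y ctrM ctrK QE !mulmxA.
have -> : sqnorm x = (y *m ctr y) 0 0.
  by rewrite /sqnorm /y ctrM ctrK -mulmxA (mulmxA (ctr U)) UtU mul1mx.
clearbody y; rewrite !mxE mulr_sumr; apply: ler_sum => j _.
rewrite mul_mx_diag !mxE mulrAC [c%:C * _]mulrC.
by apply: ler_wpM2l; [exact: mulcJ_ge0 | rewrite lecR].
Qed.

Lemma lambda_max_diagonalized :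
  (0 < k)%N -> exists2 j, lambda_max Q = d 0 j & forall l, d 0 l <= d 0 j.
Proof.
move=> k_gt0; have [j _ d_le] := @arg_maxP _ R 'I_k (Ordinal k_gt0) xpredT (d 0) isT.
exists j; last by move=> l; apply: d_le.
apply: lambda_max_eq.
  by exists (row j U); [exact: row_diagonalized_neq0 | exact: row_eigen_diagonalized].
by move=> mu /eigenvalue_diagonalized [l ->]; apply: d_le.
Qed.

End Diagonalized.

Lemma eigenvalue_le_rayleigh k (P : 'M[R[i]]_k) (c mu : R) :
  (forall x, hform P x x <= c%:C * sqnorm x) -> eigenvalue P mu%:C -> mu <= c.
Proof.
move=> rayleigh /eigenvalueP [v v_eig v0].
have := rayleigh v; rewrite (hform_eigen v_eig) ler_pM2r ?sqnorm_gt0 //.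
by rewrite lecR.
Qed.

Section Hermitian.
Variables (k : nat) (Q : 'M[R[i]]_k).
Hypotheses (k_gt0 : (0 < k)%N) (hermQ : ctr Q = Q).

Lemma hermitian_diagonalizable : exists U (d : 'rV[R]_k),
  [/\ U *m ctr U = 1%:M, ctr U *m U = 1%:M & Q = ctr U *m diag_mx (cmx d) *m U].
Proof.
have Qherm : Q \is hermsymmx.
  by rewrite is_hermitianmxE expr0 scale1r -ctr_tconj hermQ.
have U_unitary := spectral_unitarymx Q.
have UUt : spectralmx Q *m ctr (spectralmx Q) = 1%:M.
  by rewrite ctr_tconj; apply/unitarymxP.
exists (spectralmx Q), (map_mx (@complex.Re R) (spectral_diag Q)); split => //.
- by rewrite ctr_tconj -invmx_unitary // mulVmx // unitarymx_unit.
- have d_real := hermitian_spectral_diag_real Qherm.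
  have -> : cmx (map_mx (@complex.Re R) (spectral_diag Q)) = spectral_diag Q.
    by apply/matrixP => i j; rewrite !mxE RRe_real //; move/mxOverP: d_real.
  rewrite ctr_tconj -invmx_unitary //.
  exact/orthomx_spectralP/hermitian_normalmx.
Qed.

Lemma hermitian_lambda_max_eigen :
  exists2 v : 'rV_k, v != 0 & v *m Q = (lambda_max Q)%:C *: v.
Proof.
have [U [d [UUt UtU QE]]] := hermitian_diagonalizable.
have [j -> _] := lambda_max_diagonalized UUt UtU QE k_gt0.
by exists (row j U); [exact: row_diagonalized_neq0 | exact: row_eigen_diagonalized].
Qed.

Lemma hermitian_rayleigh x : hform Q x x <= (lambda_max Q)%:C * sqnorm x.
Proof.
have [U [d [UUt UtU QE]]] := hermitian_diagonalizable.
have [j -> d_le] := lambda_max_diagonalized UUt UtU QE k_gt0.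
exact: (rayleigh_diagonalized UtU QE _ d_le).
Qed.

Lemma eigenvalue_le_lambda_max (mu : R) : eigenvalue Q mu%:C -> mu <= lambda_max Q.
Proof. exact/eigenvalue_le_rayleigh/hermitian_rayleigh. Qed.

Lemma lambda_max_ge0 : (forall x, 0 <= hform Q x x) -> 0 <= lambda_max Q.
Proof.
move=> Q_psd; have [v v0 v_eig] := hermitian_lambda_max_eigen.
have := Q_psd v; rewrite (hform_eigen v_eig) pmulr_lge0 ?sqnorm_gt0 //.
by rewrite ler0c.
Qed.

Lemma lambda_max_affine (a b : R) :
  0 <= a -> lambda_max (a%:C *: Q + b%:C%:M) = a * lambda_max Q + b.
Proof.
have hformE x : hform (a%:C *: Q + b%:C%:M) x x = a%:C * hform Q x x + b%:C * sqnorm x.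
  rewrite /hform /sqnorm mulmxDr -scalemxAr mul_mx_scalar mulmxDl -!scalemxAl.
  by rewrite [LHS]mxE [X in X + _]mxE [X in _ + X]mxE.
move=> a_ge0; apply: lambda_max_eq.
  have [v v0 v_eig] := hermitian_lambda_max_eigen; exists v => //.
  by rewrite mulmxDr -scalemxAr v_eig mul_mx_scalar scalerA -scalerDl rmorphD rmorphM.
move=> mu; apply: eigenvalue_le_rayleigh => x; rewrite hformE rmorphD rmorphM mulrDl -mulrA.
by rewrite lerD2r ler_wpM2l ?ler0c ?hermitian_rayleigh.
Qed.

Lemma lambda_max_sqr : (forall x, 0 <= hform Q x x) ->
  lambda_max (Q *m Q) = lambda_max Q ^+ 2.
Proof.
move=> Q_psd; have [U [d [UUt UtU QE]]] := hermitian_diagonalizable.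
have d_ge0 j : 0 <= d 0 j.
  have := Q_psd (row j U); rewrite (hform_eigen (row_eigen_diagonalized UUt QE j)).
  by rewrite pmulr_lge0 ?sqnorm_gt0 ?row_diagonalized_neq0 // ler0c.
pose d2 := map_mx (fun x => x ^+ 2) d.
have QQE : Q *m Q = ctr U *m diag_mx (cmx d2) *m U.
  have -> : cmx d2 = \row_j (cmx d 0 j * cmx d 0 j).
    by apply/rowP => j; rewrite !mxE expr2 rmorphM.
  by rewrite -mulmx_diag QE !mulmxA -(mulmxA _ U (ctr U)) UUt mulmx1.
have [j -> d_le] := lambda_max_diagonalized UUt UtU QE k_gt0.
have [l -> d2_le] := lambda_max_diagonalized UUt UtU QQE k_gt0.
rewrite mxE; apply/le_anti; rewrite ler_pXn2r ?nnegrE ?d_ge0 // d_le /=.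
by have := d2_le j; rewrite !mxE.
Qed.

End Hermitian.

Lemma lambda_max_le k (P Q : 'M[R[i]]_k) : (0 < k)%N -> ctr P = P -> ctr Q = Q ->
  (forall x, hform P x x <= hform Q x x) -> lambda_max P <= lambda_max Q.
Proof.
move=> k_gt0 hermP hermQ PQ.
have [v v0 v_eig] := hermitian_lambda_max_eigen k_gt0 hermP.
apply: (eigenvalue_le_rayleigh (P := P)) => [x|]; last by apply/eigenvalueP; exists v.
exact: le_trans (PQ x) (hermitian_rayleigh k_gt0 hermQ x).
Qed.

End LambdaMax.

Section SingularValue.
Variable R : realType.
Implicit Types (p q : nat).

Lemma gram_psd p q (A : 'M[R[i]]_(p, q)) x : 0 <= hform (A *m ctr A) x x.
Proof. by rewrite hform_gram sqnorm_ge0. Qed.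

Lemma lambda_max_gram_ge0 p q (A : 'M[R[i]]_(p, q)) :
  (0 < p)%N -> 0 <= lambda_max (A *m ctr A).
Proof. by move=> p_gt0; apply: lambda_max_ge0 => //; [exact: ctr_gram | exact: gram_psd]. Qed.

Lemma lambda_max_gramC_le p q (A : 'M[R[i]]_(p, q)) : (0 < p)%N -> (0 < q)%N ->
  lambda_max (ctr A *m A) <= lambda_max (A *m ctr A).
Proof.
move=> p_gt0 q_gt0; have hermAtA := ctr_gram (ctr A); rewrite ctrK in hermAtA.
have [v v0 v_eig] := hermitian_lambda_max_eigen q_gt0 hermAtA.
have [u0|u_neq0] := eqVneq (v *m ctr A) 0.
  have : (lambda_max (ctr A *m A))%:C *: v = 0 by rewrite -v_eig mulmxA u0 mul0mx.
  move/eqP; rewrite scalemx_eq0 (negPf v0) orbF => /eqP [->].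
  exact: lambda_max_gram_ge0.
apply: (eigenvalue_le_lambda_max p_gt0 (ctr_gram A)).
apply/eigenvalueP; exists (v *m ctr A) => //.
by rewrite mulmxA -(mulmxA v) v_eig -scalemxAl.
Qed.

Lemma lambda_max_gramC p q (A : 'M[R[i]]_(p, q)) : (0 < p)%N -> (0 < q)%N ->
  lambda_max (ctr A *m A) = lambda_max (A *m ctr A).
Proof.
move=> p_gt0 q_gt0; apply/le_anti/andP; split; first exact: lambda_max_gramC_le.
by have := lambda_max_gramC_le (ctr A) q_gt0 p_gt0; rewrite ctrK.
Qed.

Lemma sigma_barC p q (A : 'M[R[i]]_(p, q)) : (0 < p)%N -> (0 < q)%N ->
  sigma_bar A = Num.sqrt (lambda_max (A *m ctr A)).
Proof. by move=> p_gt0 q_gt0; rewrite sigma_barE lambda_max_gramC. Qed.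

Lemma sigma_bar_sqr p q (A : 'M[R[i]]_(p, q)) : (0 < p)%N -> (0 < q)%N ->
  sigma_bar A ^+ 2 = lambda_max (A *m ctr A).
Proof.
by move=> p_gt0 q_gt0; rewrite sigma_barC // sqr_sqrtr // lambda_max_gram_ge0.
Qed.

Lemma sigma_bar_gram p q (A : 'M[R[i]]_(p, q)) : (0 < p)%N ->
  sigma_bar (A *m ctr A) = lambda_max (A *m ctr A).
Proof.
move=> p_gt0; rewrite sigma_barE ctr_gram (lambda_max_sqr p_gt0 (ctr_gram A)).
  by rewrite sqrtr_sqr ger0_norm // lambda_max_gram_ge0.
exact: gram_psd.
Qed.

Lemma sigma_bar_le p q (A B : 'M[R[i]]_(p, q)) : (0 < p)%N -> (0 < q)%N ->
  (forall x, hform (A *m ctr A) x x <= hform (B *m ctr B) x x) ->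
  sigma_bar A <= sigma_bar B.
Proof.
move=> p_gt0 q_gt0 AB.
rewrite (sigma_barC A p_gt0 q_gt0) (sigma_barC B p_gt0 q_gt0).
exact/ler_wsqrtr/(lambda_max_le p_gt0 (ctr_gram A) (ctr_gram B) AB).
Qed.

Lemma sigma_bar_cmx_gram p q (A : 'M[R]_(p, q)) : (0 < p)%N ->
  sigma_bar (cmx (A *m A^T)) = lambda_max (cmx (A *m A^T)).
Proof. by move=> p_gt0; rewrite cmxM -ctr_cmx sigma_bar_gram. Qed.

End SingularValue.

Lemma hinf_norm_at0 (R : realType) p q (Phi : R[i] -> 'M[R[i]]_(p, q)) :
  (forall om, sigma_bar (Phi (Complex 0 om)) <= sigma_bar (Phi (Complex 0 0))) ->
  hinf_norm Phi = (sigma_bar (Phi (Complex 0 0)))%:E.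
Proof.
move=> Phi_le; apply/le_anti/andP; split.
  by apply: ge_ereal_sup => _ [om _ <-]; rewrite lee_fin.
by apply: ereal_sup_ubound; exists 0.
Qed.

Section FrequencyResponse.
Variables (R : realType) (k m r : nat).
Variables (F : 'M[R]_(k, r)) (L W : 'M[R]_k) (K : 'M[R]_(k, m)) (a b : R).
Hypotheses (F_free : row_free F) (LE : L = F *m F^T).
Hypotheses (W_sym : W^T = W) (W_unit : W \in unitmx).
Hypothesis KKt : K *m K^T = a *: L + b *: (L *m W *m L).

Implicit Types (om : R) (u : 'rV[R[i]]_k).
Local Notation jw om := (Complex 0 om).

Definition transfer (s : R[i]) : 'M[R[i]]_(k, m) :=
  invmx (s%:M + cmx (L *m W)) *m cmx K.

Lemma gram_sym : L^T = L.
Proof. by rewrite LE trmx_mul trmxK. Qed.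

Lemma hform_gram_eq0 u : hform (cmx L) u u = 0 -> u = 0.
Proof.
rewrite LE cmxM -ctr_cmx hform_gram => /eqP; rewrite sqnorm_eq0.
by rewrite mulmx_free_eq0 ?cmx_row_free // => /eqP.
Qed.

Lemma jwN om : jw (- om) = - jw om.
Proof. by apply/eqP; rewrite eq_complex /= oppr0 !eqxx. Qed.

Lemma hform_resolvent om u :
  hform (((jw om)%:M + cmx (L *m W)) *m cmx (invmx W)) u u
  = jw om * hform (cmx (invmx W)) u u + hform (cmx L) u u.
Proof.
rewrite /hform !mulmxA mulmxDr mul_mx_scalar !mulmxDl -!scalemxAl cmxM !mulmxA.
rewrite -(mulmxA _ (cmx W)) -cmxM mulmxV // cmx_scalar mulmx1.
by rewrite [LHS]mxE [X in X + _]mxE.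
Qed.

Lemma invW_sym : (invmx W)^T = invmx W.
Proof. by rewrite trmx_inv W_sym. Qed.

Lemma resolvent_unit om : (jw om)%:M + cmx (L *m W) \in unitmx.
Proof.
(* Testing [v (jw om + L W) = 0] against [v W^-1] gives [jw om * X + Y = 0] with [X] and
   [Y = |v F|^2] real, so [Y = 0]. *)
rewrite unitmxE unitfE; apply/negP => /det0P [v v0 v_ker].
have hv : jw om * hform (cmx (invmx W)) v v + hform (cmx L) v v = 0.
  by rewrite -hform_resolvent /hform mulmxA v_ker !mul0mx mxE.
have hv' : - (jw om * hform (cmx (invmx W)) v v) + hform (cmx L) v v = 0.
  have := congr1 conjc hv; rewrite rmorphD rmorphM /=.
  by rewrite (hform_cmx_sym _ invW_sym) (hform_cmx_sym _ gram_sym) jwN mulNr oppr0.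
have := congr2 +%R hv hv'; rewrite addrACA addrN add0r addr0 -mulr2n.
by move/eqP; rewrite mulrn_eq0 /= => /eqP /hform_gram_eq0 /eqP; rewrite (negPf v0).
Qed.

Lemma resolvent0 : (jw 0)%:M + cmx (L *m W) = cmx (L *m W).
Proof. by rewrite (_ : jw 0 = 0) // raddf0 add0r. Qed.

Lemma gram_unit : L \in unitmx.
Proof.
rewrite -cmx_unitmx unitmxE unitfE; apply/negP => /det0P [v v0 v_ker].
have /hform_gram_eq0 /eqP : hform (cmx L) v v = 0 by rewrite /hform v_ker mul0mx mxE.
by rewrite (negPf v0).
Qed.

Lemma gram_mul_unit : L *m W \in unitmx.
Proof. by rewrite unitmx_mul gram_unit W_unit. Qed.

Lemma hform_KKt_resolvent_le om u y :
  u *m ((jw om)%:M + cmx (L *m W)) = y *m cmx (L *m W) ->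
  hform (cmx K *m ctr (cmx K)) u u <= hform (cmx K *m ctr (cmx K)) y y.
Proof.
move=> uy; set d := y - u.
have dLW : d *m cmx (L *m W) = jw om *: u.
  by rewrite /d mulmxBl -uy mulmxDr mul_mx_scalar addrK.
have dL : d *m cmx L = jw om *: (u *m cmx (invmx W)).
  by rewrite scalemxAl -dLW cmxM cmx_invmx mulmxA mulmxK ?cmx_unitmx.
set rho := a%:C * hform (cmx (invmx W)) u u + b%:C * hform (cmx L) u u.
have hform_du : hform (cmx K *m ctr (cmx K)) d u = jw om * rho.
  rewrite /hform ctr_cmx -cmxM KKt cmxD !cmxZ !cmxM mulmxDr -!scalemxAr.
  rewrite !mulmxA -(mulmxA d) -cmxM dLW dL mulmxDl -!scalemxAl !scalerA.
  rewrite [LHS]mxE [X in X + _]mxE [X in _ + X]mxE /rho /hform mulrDr !mulrA.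
  by rewrite [a%:C * _]mulrC [b%:C * _]mulrC.
have rho_real : rho^* = rho.
  rewrite rmorphD !rmorphM /= !oppr0.
  by rewrite (hform_cmx_sym _ gram_sym) (hform_cmx_sym _ invW_sym).
have -> : y = u + d by rewrite /d addrC subrK.
clearbody d; rewrite !hformDl !hformDr (hformC u d (ctr_gram _)) hform_du rmorphM /=.
by rewrite rho_real jwN mulNr -addrA addKr lerDl gram_psd.
Qed.

Lemma hform_transfer_gram s x :
  hform (transfer s *m ctr (transfer s)) x x
  = hform (cmx K *m ctr (cmx K)) (x *m invmx (s%:M + cmx (L *m W)))
                                 (x *m invmx (s%:M + cmx (L *m W))).
Proof. by rewrite [LHS]hform_gram [RHS]hform_gram mulmxA. Qed.

Lemma transfer_gram_le om x :
  hform (transfer (jw om) *m ctr (transfer (jw om))) x x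
  <= hform (transfer (jw 0) *m ctr (transfer (jw 0))) x x.
Proof.
rewrite [leLHS]hform_transfer_gram [leRHS]hform_transfer_gram resolvent0.
apply: (@hform_KKt_resolvent_le om).
by rewrite (mulmxKV (resolvent_unit om)) (mulmxKV _) // cmx_unitmx gram_mul_unit.
Qed.

Lemma gram_congr_inv :
  invmx (L *m W) *m (a *: L + b *: (L *m W *m L)) *m invmx (W *m L)
  = a *: invmx (W *m L *m W) + b *: invmx W.
Proof.
have WL_unit : W *m L \in unitmx by rewrite unitmx_mul W_unit gram_unit.
rewrite (invmxM gram_unit W_unit) (invmxM W_unit gram_unit) (invmxM WL_unit W_unit).
rewrite (invmxM W_unit gram_unit) mulmxDr mulmxDl -!scalemxAr -!scalemxAl !mulmxA.
rewrite (mulmxKV gram_unit); congr (_ *: _ + _ *: _).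
by rewrite (mulmxK gram_unit) (mulVmx W_unit) mul1mx.
Qed.

Lemma transfer0_gram : transfer (jw 0) *m ctr (transfer (jw 0))
  = cmx (a *: invmx (W *m L *m W) + b *: invmx W).
Proof.
have -> : transfer (jw 0) = cmx (invmx (L *m W) *m K).
  by rewrite /transfer resolvent0 [RHS]cmxM cmx_invmx.
rewrite ctr_cmx -cmxM -gram_congr_inv trmx_mul mulmxA -(mulmxA _ K) KKt.
by rewrite trmx_inv trmx_mul gram_sym W_sym.
Qed.

Lemma hinf_norm_transfer : (0 < k)%N -> (0 < m)%N ->
  hinf_norm transfer = (sigma_bar (transfer (jw 0)))%:E.
Proof.
move=> k_gt0 m_gt0; apply: hinf_norm_at0 => om.
exact: (sigma_bar_le k_gt0 m_gt0 (transfer_gram_le om)).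
Qed.

Lemma hinf_norm_mul_transfer p (P : 'M[R[i]]_(p, k)) : (0 < p)%N -> (0 < m)%N ->
  hinf_norm (fun s => P *m transfer s) = (sigma_bar (P *m transfer (jw 0)))%:E.
Proof.
move=> p_gt0 m_gt0; apply: hinf_norm_at0 => om.
apply: (sigma_bar_le p_gt0 m_gt0) => x; cbv beta.
rewrite [leLHS]hform_mul_gram [leRHS]hform_mul_gram; exact: transfer_gram_le.
Qed.

End FrequencyResponse.

Section Incidence.
Variables (R : fieldType) (n m : nat) (e : 'I_m -> 'I_n * 'I_n).
Hypothesis loop_free : forall l, (e l).1 != (e l).2.

Lemma mulmx_incidence (u : 'rV[R]_n) l :
  (u *m incidence R e) 0 l = u 0 (e l).1 - u 0 (e l).2.
Proof.
rewrite mxE (bigD1 (e l).1) //= mxE eqxx mulr1 (bigD1 (e l).2) /=; last by rewrite eq_sym.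
rewrite mxE (negPf (loop_free l)) eqxx mulrN1 big1 ?addr0 // => i /andP [ni1 ni2].
by rewrite mxE eq_sym (negPf ni1) eq_sym (negPf ni2) mulr0.
Qed.

Hypothesis connected : forall i j : 'I_n, connect (adj e) i j.

Lemma incidence_ker_const (u : 'rV[R]_n) :
  u *m incidence R e = 0 -> forall i j, u 0 i = u 0 j.
Proof.
move=> u_ker; have u_adj i j : adj e i j -> u 0 i = u 0 j.
  case/existsP => l /orP [] /andP [/eqP <- /eqP <-]; have := mulmx_incidence u l;
    by rewrite u_ker mxE => /eqP; rewrite eq_sym subr_eq0 => /eqP.
move=> i j; have /connectP [p p_path ->] := connected i j.
by elim: p i p_path => [|x p IHp] i //= /andP [/u_adj -> /IHp].
Qed.

Lemma connected_incidence_rank : (n.-1 <= \rank (incidence R e))%N.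
Proof.
case: n e loop_free connected incidence_ker_const => [//|n'] e' _ _ ker_const.
have ker_sub : (kermx (incidence R e') <= (const_mx 1 : 'rV[R]_n'.+1))%MS.
  apply/row_subP => r; have /sub_kermxP := row_sub r (kermx (incidence R e')).
  move: (row r _) => u u_ker; apply/sub_rVP; exists (u 0 0).
  by apply/rowP => j; rewrite !mxE mulr1 (ker_const _ u_ker j 0).
have := leq_trans (mxrankS ker_sub) (rank_leq_row _).
by rewrite mxrank_ker leq_subLR addn1 ltnS.
Qed.

End Incidence.

Lemma tree_incidence_row_free (R : fieldType) n (e : 'I_n.-1 -> 'I_n * 'I_n) :
  is_tree e -> row_free (incidence R e)^T.
Proof.
case=> loop_free _ connected; rewrite /row_free mxrank_tr eqn_leq rank_leq_col.
exact: connected_incidence_rank.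
Qed.

Section DiagonalPowers.
Variables (R : realType) (k : nat) (d : 'I_k -> R).
Hypothesis d_gt0 : forall i, 0 < d i.

Lemma diag_sqrtM : diag_sqrt d *m diag_sqrt d = diagm d.
Proof.
by rewrite mulmx_diag; congr diag_mx; apply/rowP => i; rewrite !mxE -expr2 sqr_sqrtr ?ltW.
Qed.

Lemma diag_invsqrtM : diag_invsqrt d *m diag_invsqrt d = diag_inv d.
Proof.
rewrite mulmx_diag; congr diag_mx; apply/rowP => i.
by rewrite !mxE -invfM -expr2 sqr_sqrtr ?ltW.
Qed.

Lemma diagmV : diagm d *m diag_inv d = 1%:M.
Proof.
rewrite mulmx_diag -diag_const_mx; congr diag_mx; apply/rowP => i.
by rewrite !mxE mulfV ?gt_eqF.
Qed.

Lemma diag_sqrtV : diag_sqrt d *m diag_invsqrt d = 1%:M.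
Proof.
rewrite mulmx_diag -diag_const_mx; congr diag_mx; apply/rowP => i.
by rewrite !mxE mulfV ?gt_eqF ?sqrtr_gt0.
Qed.

Lemma invmx_diagm : invmx (diagm d) = diag_inv d.
Proof. exact: invmx_eq diagmV. Qed.

Lemma diagm_unit : diagm d \in unitmx.
Proof. by case: (mulmx1_unit diagmV). Qed.

Lemma diag_sqrt_unit : diag_sqrt d \in unitmx.
Proof. by case: (mulmx1_unit diag_sqrtV). Qed.

Lemma diag_invsqrt_unit : diag_invsqrt d \in unitmx.
Proof. by case: (mulmx1_unit diag_sqrtV). Qed.

End DiagonalPowers.

Section EdgeConsensus.
Variables (R : realType) (n : nat) (e : 'I_n.-1 -> 'I_n * 'I_n).
Variables (w : 'I_n.-1 -> R) (eps : 'I_n -> R) (sw sv : R).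
Hypotheses (n_ge2 : (2 <= n)%N) (tree : is_tree e).
Hypotheses (w_gt0 : forall l, 0 < w l) (eps_gt0 : forall i, 0 < eps i).

Local Notation F := ((incidence R e)^T *m diag_invsqrt eps).
Local Notation L := (edge_lap e eps).
Local Notation W := (diagm w).
Local Notation Wh := (diag_sqrt w).

Let W_sym : W^T = W := tr_diag_mx _.
Let Wh_sym : Wh^T = Wh := tr_diag_mx _.
Let W_unit : W \in unitmx := diagm_unit w_gt0.
Let Wh_unit : Wh \in unitmx := diag_sqrt_unit w_gt0.

Lemma edge_count_gt0 : (0 < n.-1)%N.
Proof. by case: n n_ge2 => [|[|]]. Qed.

Lemma noise_count_gt0 : (0 < n + n.-1)%N.
Proof. by rewrite addn_gt0 edge_count_gt0 orbT. Qed.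

Definition noise_input : 'M[R]_(n.-1, n + n.-1) :=
  row_mx (sw *: F) ((- sv) *: (L *m Wh)).

Lemma edge_lap_gram : L = F *m F^T.
Proof.
by rewrite /edge_lap -(diag_invsqrtM eps_gt0) trmx_mul tr_diag_mx trmxK !mulmxA.
Qed.

Lemma edge_lap_sym : L^T = L.
Proof. by rewrite edge_lap_gram trmx_mul trmxK. Qed.

Lemma scaled_incidence_row_free : row_free F.
Proof.
rewrite /row_free mxrankMfree; first exact: tree_incidence_row_free.
by rewrite row_free_unit diag_invsqrt_unit.
Qed.

Lemma noise_input_gram :
  noise_input *m noise_input^T = sw ^+ 2 *: L + sv ^+ 2 *: (L *m W *m L).
Proof.
rewrite tr_row_mx mul_row_col !linearZ /= -!scalemxAl !scalerA mulrNN -!expr2.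
rewrite -edge_lap_gram trmx_mul edge_lap_sym tr_diag_mx !mulmxA -(mulmxA L Wh).
by rewrite diag_sqrtM.
Qed.

Lemma Sigma_tauE : Sigma_tau e w eps sw sv = transfer L W noise_input.
Proof. by apply/funext => s; rewrite /Sigma_tau /transfer /noise_input /cmx map_row_mx. Qed.

Lemma Pi_tauE : Pi_tau e w eps sw sv = (fun s => cmx Wh *m transfer L W noise_input s).
Proof. by apply/funext => s; rewrite /Pi_tau Sigma_tauE. Qed.

Lemma transfer0_gram_tree :
  transfer L W noise_input (Complex 0 0) *m ctr (transfer L W noise_input (Complex 0 0))
  = cmx (sw ^+ 2 *: invmx (W *m L *m W) + sv ^+ 2 *: diag_inv w).
Proof.
rewrite (transfer0_gram scaled_incidence_row_free edge_lap_gram W_sym W_unit noise_input_gram).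
by rewrite invmx_diagm.
Qed.

Lemma hinf_norm_Sigma_tau_sqr :
  (hinf_norm (Sigma_tau e w eps sw sv) * hinf_norm (Sigma_tau e w eps sw sv))%E
  = (sigma_bar (cmx (sw ^+ 2 *: invmx (W *m L *m W) + sv ^+ 2 *: diag_inv w)))%:E.
Proof.
rewrite Sigma_tauE (hinf_norm_transfer scaled_incidence_row_free edge_lap_gram W_sym W_unit
  noise_input_gram edge_count_gt0 noise_count_gt0) -EFinM -expr2.
rewrite (sigma_bar_sqr _ edge_count_gt0 noise_count_gt0) -(sigma_bar_gram _ edge_count_gt0).
by rewrite transfer0_gram_tree.
Qed.

Lemma hinf_norm_Pi_tau_sqr :
  (hinf_norm (Pi_tau e w eps sw sv) * hinf_norm (Pi_tau e w eps sw sv))%E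
  = (sw ^+ 2 * sigma_bar (cmx (invmx (Wh *m L *m Wh))) + sv ^+ 2)%:E.
Proof.
have L_unit := gram_unit scaled_incidence_row_free edge_lap_gram.
rewrite Pi_tauE (hinf_norm_mul_transfer scaled_incidence_row_free edge_lap_gram W_sym W_unit
  noise_input_gram (cmx Wh) edge_count_gt0 noise_count_gt0) -EFinM -expr2.
rewrite (sigma_bar_sqr _ edge_count_gt0 noise_count_gt0) ctrM mulmxA -(mulmxA (cmx Wh)).
rewrite transfer0_gram_tree ctr_cmx Wh_sym -!cmxM.
rewrite -(invmx_diagm w_gt0) -(diag_sqrtM w_gt0) (sqrt_congr_inv _ _ L_unit Wh_unit).
have S_gram : Wh *m L *m Wh = (Wh *m F) *m (Wh *m F)^T.
  by rewrite edge_lap_gram (trmx_mul Wh) Wh_sym !mulmxA.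
have S_unit : (Wh *m F) *m (Wh *m F)^T \in unitmx.
  by rewrite -S_gram !unitmx_mul L_unit Wh_unit.
rewrite S_gram (invmx_gram S_unit).
rewrite (sigma_bar_cmx_gram _ edge_count_gt0) cmxD cmxZ cmx_scalar.
rewrite (lambda_max_affine edge_count_gt0) ?sqr_ge0 //.
by rewrite cmxM -ctr_cmx ctr_gram.
Qed.

End EdgeConsensus.

Theorem corollary2 (R : realType) (n : nat) (e : 'I_n.-1 -> 'I_n * 'I_n)
  (w : 'I_n.-1 -> R) (eps : 'I_n -> R) (sw sv : R) :
  (2 <= n)%N ->
  is_tree e ->
  (forall l, 0 < w l) ->
  (forall i, 0 < eps i) ->
  (hinf_norm (Sigma_tau e w eps sw sv) * hinf_norm (Sigma_tau e w eps sw sv))%E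
    = (sigma_bar (cmx (sw ^+ 2 *: invmx (diagm w *m edge_lap e eps *m diagm w)
                       + sv ^+ 2 *: diag_inv w)))%:E
  /\
  (hinf_norm (Pi_tau e w eps sw sv) * hinf_norm (Pi_tau e w eps sw sv))%E
    = (sw ^+ 2 * sigma_bar (cmx (invmx (diag_sqrt w *m edge_lap e eps
                                        *m diag_sqrt w)))
       + sv ^+ 2)%:E.
Proof.
move=> n_ge2 tree w_gt0 eps_gt0; split.
  exact: hinf_norm_Sigma_tau_sqr.
exact: hinf_norm_Pi_tau_sqr.
Qed.
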